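(* (i) Let $C'$ be a ternary Euclidean LCD $[n,k]$ code with $k\ge1$. Then there exist a ternary Euclidean LCD $[n,k-1]$ code $C$ with generator matrix $G$ and a vector $\mathbf{y}\in C^{\perp_E}$ with $wt(\mathbf{y})\not\equiv 0\pmod 3$ such that $C'$ is the code with generator matrix $\begin{pmatrix}\mathbf{y}\\ G\end{pmatrix}$. (ii) Let $C'$ be a quaternary Hermitian LCD $[n,k]$ code with $k\ge 1$. Then there exist a quaternary Hermitian LCD $[n,k-1]$ code $C$ with generator matrix $G$ and a vector $\mathbf{y}\in C^{\perp_H}$ of odd Hamming weight such that $C'$ is the code with generator matrix $\begin{pmatrix}\mathbf{y}\\ G\end{pmatrix}$.
   Context: Ternary and quaternary codes are linear codes over $\mathbb{F}_3$ and $\mathbb{F}_4$. An $[n,k]$ code is a $k$-dimensional subspace; a generator matrix has rows forming a basis. $wt$ is the Hamming weight. Euclidean inner product $\langle x,y\rangle_E=\sum x_iy_i$ with dual $C^{\perp_E}$; on $\mathbb{F}_4^n$ the Hermitian inner product is $\langle x,y\rangle_H=\sum x_iy_i^2$ with dual $C^{\perp_H}$. A code is (Euclidean/Hermitian) LCD if $C\cap C^{\perp}=\{0\}$. *)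

From HB Require Import structures.
From mathcomp Require Import all_boot all_order all_algebra all_field.
Set Implicit Arguments. Unset Strict Implicit. Unset Printing Implicit Defensive.
Import GRing.Theory.
Local Open Scope ring_scope.

(* Linear codes of length n over a field F are row spaces (mxalgebra) of
   generator matrices G : 'M[F]_(m, n); a codeword is a row vector
   c : 'rV[F]_n with (c <= G)%MS. An [n,k] code is the row space of a
   row-free (full row rank) k x n matrix. *)

Definition ipE (F : fieldType) (n : nat) (x y : 'rV[F]_n) : F :=
  \sum_(i < n) x 0 i * y 0 i.

(* Hermitian inner product <x,y>_H = sum x_i y_i^2 (for F_4) *)
Definition ipH (F : fieldType) (n : nat) (x y : 'rV[F]_n) : F :=
  \sum_(i < n) x 0 i * (y 0 i) ^+ 2.

Definition wt (F : fieldType) (n : nat) (x : 'rV[F]_n) : nat :=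
  #|[set i : 'I_n | x 0 i != 0]|.

Definition in_dual (F : fieldType) (n m : nat)
  (ip : 'rV[F]_n -> 'rV[F]_n -> F) (G : 'M[F]_(m, n)) (x : 'rV[F]_n) : Prop :=
  forall c : 'rV[F]_n, (c <= G)%MS -> ip x c = 0.

Definition LCD (F : fieldType) (n m : nat)
  (ip : 'rV[F]_n -> 'rV[F]_n -> F) (G : 'M[F]_(m, n)) : Prop :=
  forall x : 'rV[F]_n, (x <= G)%MS -> in_dual ip G x -> x = 0.

(* Both inner products are instances of the form
   <x, y> = sum_i x_i sigma(y_i), with sigma the identity (Euclidean, F_3) or
   the Frobenius t |-> t^2 (Hermitian, F_4).  If some t has t + sigma t <> 0
   (t = 1 in F_3, t a primitive element of F_4), polarization shows that a
   totally isotropic code is self-orthogonal; a nonzero LCD code therefore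
   contains y with <y, y> <> 0.  Then C' = <y> (+) (C' /\ y^perp), and
   C := C' /\ y^perp is again LCD: a vector of C orthogonal to C is also
   orthogonal to y, hence to C'.  Finally <y, y> = wt(y) in both fields, since
   t sigma(t) = t^(q-1) is 1 for t <> 0. *)

From HB Require Import structures.
From mathcomp Require Import all_boot all_order all_algebra all_field.
From Stdlib Require Import Classical.
Set Implicit Arguments.
Unset Strict Implicit.
Unset Printing Implicit Defensive.
Import GRing.Theory.
Local Open Scope ring_scope.

Lemma exists_row_base_of_rank (F : fieldType) m n k (A : 'M[F]_(m, n)) :
  \rank A = k -> exists2 B : 'M[F]_(k, n), row_free B & (B :=: A)%MS.
Proof.
by move=> <-; exists (row_base A); [exact: row_base_free | exact: eq_row_base].
Qed.

Lemma LCD_eqmx (F : fieldType) n m1 m2 (ip : 'rV[F]_n -> 'rV[F]_n -> F)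
    (A : 'M_(m1, n)) (B : 'M_(m2, n)) :
  (A :=: B)%MS -> LCD ip B -> LCD ip A.
Proof.
move=> eqAB lcdB x; rewrite eqAB => xB xd.
by apply: lcdB => // c; rewrite -eqAB; exact: xd.
Qed.

Lemma in_dual_eqmx (F : fieldType) n m1 m2 (ip : 'rV[F]_n -> 'rV[F]_n -> F)
    (A : 'M_(m1, n)) (B : 'M_(m2, n)) x :
  (A :=: B)%MS -> in_dual ip B x -> in_dual ip A x.
Proof. by move=> eqAB xd c; rewrite eqAB; exact: xd. Qed.

Lemma self_orthogonal_LCD_eq0 (F : fieldType) n m (ip : 'rV[F]_n -> 'rV[F]_n -> F)
    (A : 'M_(m, n)) :
  LCD ip A -> (forall x z, (x <= A)%MS -> (z <= A)%MS -> ip x z = 0) -> A = 0.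
Proof.
move=> lcdA orthA; apply/row_matrixP => i; rewrite row0.
by apply: lcdA => [|c cA]; [exact: row_sub | apply: orthA => //; exact: row_sub].
Qed.

Section SesquilinearForm.
Variables (F : fieldType) (sigma : {rmorphism F -> F}) (n : nat).
Implicit Types (x y z : 'rV[F]_n) (a : F).

(* [ipE] is [sform idfun], and [ipH] is [sform] of the Frobenius map in
   characteristic 2, both up to conversion. *)
Definition sform x y : F := \sum_(i < n) x 0 i * sigma (y 0 i).

Lemma sform_mx x y : x *m (map_mx sigma y)^T = (sform x y)%:M.
Proof.
apply/matrixP => i j; rewrite !ord1 !mxE eqxx mulr1n.
by apply: eq_bigr => l _; rewrite !mxE.
Qed.

Lemma sformDl x y z : sform (x + y) z = sform x z + sform y z.
Proof. by rewrite /sform -big_split; apply: eq_bigr => i _; rewrite mxE mulrDl. Qed.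

Lemma sformZl a x y : sform (a *: x) y = a * sform x y.
Proof. by rewrite /sform mulr_sumr; apply: eq_bigr => i _; rewrite mxE mulrA. Qed.

Lemma sformDr x y z : sform x (y + z) = sform x y + sform x z.
Proof.
by rewrite /sform -big_split; apply: eq_bigr => i _; rewrite mxE rmorphD mulrDr.
Qed.

Lemma sformZr a x y : sform x (a *: y) = sigma a * sform x y.
Proof.
by rewrite /sform mulr_sumr; apply: eq_bigr => i _; rewrite mxE rmorphM mulrCA.
Qed.

Lemma sform_wt y : (forall t, t * sigma t = (t != 0)%:R) -> sform y y = (wt y)%:R.
Proof.
move=> normE; rewrite /wt -sum1_card natr_sum big_mkcond /=.
by apply: eq_bigr => i _; rewrite inE normE; case: (y 0 i != 0).
Qed.

Hypotheses (sigmaK : involutive sigma) (trace_neq0 : exists t, t + sigma t != 0).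

Lemma sformC x y : sform y x = sigma (sform x y).
Proof.
by rewrite rmorph_sum; apply: eq_bigr => i _; rewrite rmorphM sigmaK mulrC.
Qed.

Lemma sform_orthogonalC x y : sform x y = 0 -> sform y x = 0.
Proof. by move=> xy0; rewrite sformC xy0 rmorph0. Qed.

(* Polarization: if [x] and [z] are isotropic then
   [sform (a x + z) (a x + z) = t + sigma t] with [t = a * sform x z],
   and [t] runs over all of [F] when [sform x z != 0]. *)
Lemma totally_isotropic_orthogonal m (A : 'M_(m, n)) :
  (forall x, (x <= A)%MS -> sform x x = 0) ->
  forall x z, (x <= A)%MS -> (z <= A)%MS -> sform x z = 0.
Proof.
move=> isoA x z xA zA; have [t trace_t] := trace_neq0.
apply/eqP; apply: contra_neqT trace_t => xz_neq0.
have := isoA (t / sform x z *: x + z) (addmx_sub (scalemx_sub _ xA) zA).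
rewrite !(sformDl, sformDr, sformZl, sformZr) (isoA x) // (isoA z) // (sformC x z).
by rewrite !mulr0 add0r addr0 -rmorphM divfK // => ->.
Qed.

Variables (k : nat) (C : 'M[F]_(k.+1, n)).
Hypotheses (C_free : row_free C) (C_LCD : LCD sform C).

Lemma LCD_exists_anisotropic : exists2 y, (y <= C)%MS & sform y y != 0.
Proof.
apply: NNPP => no_aniso.
have isoC x : (x <= C)%MS -> sform x x = 0.
  by move=> xC; apply/eqP; apply: contra_notT no_aniso => ?; exists x.
have C0 := self_orthogonal_LCD_eq0 C_LCD (totally_isotropic_orthogonal isoC).
by move: C_free; rewrite /row_free C0 mxrank0.
Qed.

Section OrthogonalComplement.
Variable y : 'rV[F]_n.
Hypotheses (yC : (y <= C)%MS) (yy_neq0 : sform y y != 0).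

Let D := (C :&: kermx (map_mx sigma y)^T)%MS.

Lemma sub_orth x : (x <= D)%MS = (x <= C)%MS && (sform x y == 0).
Proof. by rewrite sub_capmx sub_kermx sform_mx fmorph_eq0. Qed.

Lemma sub_orth_proj x :
  (x <= C)%MS -> (x - (sform x y / sform y y) *: y <= D)%MS.
Proof.
move=> xC; rewrite sub_orth addmx_sub ?eqmx_opp ?scalemx_sub //=.
by rewrite sformDl -scaleNr sformZl mulNr divfK // subrr.
Qed.

Lemma adds_orth_eq : (y + D == C)%MS.
Proof.
rewrite addsmx_sub yC capmxSl /=; apply/row_subP => i.
rewrite -[row i C](subrK ((sform (row i C) y / sform y y) *: y)) addrC.
apply: addmx_sub_adds; first exact: scalemx_sub.
by apply: sub_orth_proj; exact: row_sub.
Qed.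

Lemma cap_orth_eq0 : (y :&: D)%MS = 0.
Proof.
apply/eqP; rewrite -submx0; apply/rV_subP => x.
rewrite sub_capmx => /andP[/sub_rVP[b ->]].
rewrite sub_orth sformZl mulf_eq0 (negbTE yy_neq0) orbF => /andP[_ /eqP ->].
by rewrite scale0r sub0mx.
Qed.

Lemma rank_orth : \rank D = k.
Proof.
have y_neq0 : y != 0.
  apply: contraNneq yy_neq0 => ->.
  by rewrite /sform big1 // => i _; rewrite mxE mul0r.
have := mxrank_sum_cap y D.
rewrite cap_orth_eq0 mxrank0 addn0 (eqmxP adds_orth_eq).
by rewrite (eqP C_free) rank_rV y_neq0 add1n => -[].
Qed.

Lemma orth_LCD : LCD sform D.
Proof.
move=> x; rewrite sub_orth => /andP[xC /eqP xy0] xD; apply: C_LCD => // c cC.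
rewrite -[c](subrK ((sform c y / sform y y) *: y)) sformDr sformZr xy0 mulr0 addr0.
by apply: xD; exact: sub_orth_proj.
Qed.

Lemma orth_dual : in_dual sform D y.
Proof. by move=> c; rewrite sub_orth => /andP[_ /eqP /sform_orthogonalC]. Qed.

End OrthogonalComplement.

Theorem LCD_decomposition :
  exists (G : 'M[F]_(k, n)) (y : 'rV[F]_n),
    [/\ row_free G, LCD sform G, in_dual sform G y, sform y y != 0
      & (col_mx y G == C)%MS].
Proof.
have [y yC yy_neq0] := LCD_exists_anisotropic.
have [G G_free eqGD] := exists_row_base_of_rank (rank_orth yC yy_neq0).
exists G, y; split => //.
- exact: LCD_eqmx eqGD (orth_LCD yC yy_neq0).
- exact: in_dual_eqmx eqGD (@orth_dual y).
apply/eqmxP; apply: eqmx_trans (eqmx_sym (addsmxE y G)) _.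
apply: eqmx_trans (adds_eqmx (eqmx_refl y) eqGD) _.
by apply/eqmxP; exact: adds_orth_eq.
Qed.

End SesquilinearForm.

Lemma expf_card_pred (F : finFieldType) (t : F) : t ^+ #|F|.-1 = (t != 0)%:R.
Proof.
have [->|t_neq0] := eqVneq t 0.
  by rewrite expr0n -subn1 subn_eq0 leqNgt finNzRing_gt1.
apply: (mulfI t_neq0); rewrite -exprS prednK ?expf_card ?mulr1 //.
exact: ltnW (finNzRing_gt1 F).
Qed.

Lemma F3_trace_neq0 : exists t : 'F_3, t + idfun t != 0.
Proof. by exists 1. Qed.

Lemma F3_norm (t : 'F_3) : t * idfun t = (t != 0)%:R.
Proof. by rewrite -expr2 -(expf_card_pred t) card_Fp. Qed.

Lemma ternary_LCD_decomposition n k (G' : 'M['F_3]_(k.+1, n)) :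
  row_free G' -> LCD (@ipE _ n) G' ->
  exists (G : 'M['F_3]_(k, n)) (y : 'rV['F_3]_n),
    [/\ row_free G, LCD (@ipE _ n) G, in_dual (@ipE _ n) G y,
        (wt y %% 3 != 0)%N & (col_mx y G == G')%MS].
Proof.
move=> G'_free G'_LCD.
have [G [y [G_free G_LCD yG yy_neq0 eqG']]] :=
  LCD_decomposition (sigma := idfun) (fun _ => erefl) F3_trace_neq0 G'_free G'_LCD.
exists G, y; split => //.
by move: yy_neq0; rewrite (sform_wt _ F3_norm) -(dvdn_pcharf (pchar_Fp _)).
Qed.

Section Quaternary.
Variables (F : finFieldType) (F_card : #|F| = 4%N).

Lemma pchar_F4 : 2%N \in [pchar F].
Proof. exact: (@card_finPcharP F 2 2). Qed.

Let frob := pFrobenius_aut pchar_F4.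

Lemma frobK : involutive frob.
Proof.
by move=> x; rewrite /frob !pFrobenius_autE -exprM -[RHS]expf_card F_card.
Qed.

Lemma frob_trace_neq0 : exists t, t + frob t != 0.
Proof.
have [t _] : exists2 t : F, t \in [set: F] & t \notin [set 0; 1].
  apply/subsetPn; apply: contraTN isT => /subset_leq_card.
  by rewrite cardsT F_card cards2; case: (_ != _).
rewrite !inE negb_or => /andP[t_neq0 t_neq1]; exists t.
rewrite /frob pFrobenius_autE expr2 -{1}(mulr1 t) -mulrDr mulf_neq0 //.
by apply: contra t_neq1; rewrite addrC addr_eq0 (oppr_pchar2 pchar_F4).
Qed.

Lemma frob_norm (t : F) : t * frob t = (t != 0)%:R.
Proof. by rewrite /frob pFrobenius_autE -exprS -(expf_card_pred t) F_card. Qed.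

Lemma quaternary_LCD_decomposition n k (G' : 'M[F]_(k.+1, n)) :
  row_free G' -> LCD (@ipH _ n) G' ->
  exists (G : 'M[F]_(k, n)) (y : 'rV[F]_n),
    [/\ row_free G, LCD (@ipH _ n) G, in_dual (@ipH _ n) G y,
        odd (wt y) & (col_mx y G == G')%MS].
Proof.
move=> G'_free G'_LCD.
have [G [y [G_free G_LCD yG yy_neq0 eqG']]] :=
  LCD_decomposition frobK frob_trace_neq0 G'_free G'_LCD.
exists G, y; split => //.
by rewrite -[odd _]negbK -dvdn2 (dvdn_pcharf pchar_F4) -(sform_wt _ frob_norm).
Qed.

End Quaternary.

Theorem theorem3p12 :
  (* (i) ternary Euclidean LCD codes; C' is an [n, k.+1] code *)
  (forall (n k : nat) (G' : 'M['F_3]_(k.+1, n)),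
     row_free G' -> LCD (@ipE _ n) G' ->
     exists (G : 'M['F_3]_(k, n)) (y : 'rV['F_3]_n),
       [/\ row_free G, LCD (@ipE _ n) G, in_dual (@ipE _ n) G y,
           (wt y %% 3 != 0)%N & (col_mx y G == G')%MS])
  /\
  (* (ii) quaternary Hermitian LCD codes, over any field F with 4 elements *)
  (forall (F : finFieldType), #|F| = 4%N ->
   forall (n k : nat) (G' : 'M[F]_(k.+1, n)),
     row_free G' -> LCD (@ipH _ n) G' ->
     exists (G : 'M[F]_(k, n)) (y : 'rV[F]_n),
       [/\ row_free G, LCD (@ipH _ n) G, in_dual (@ipH _ n) G y,
           odd (wt y) & (col_mx y G == G')%MS]).
Proof.
by split; [exact: ternary_LCD_decomposition | exact: quaternary_LCD_decomposition].
Qed.
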